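(* Let $I\in\mathbb{I}_{m,n}$ be written in staircase form $I=\bigsqcup_{i=s}^t[b_i,d_i]_i$. Let $C$ be the set of full subquivers of $G_{m,n}$ with vertex set $I_0\cup\{v\}$, where $v$ is a vertex of $G_{m,n}$ (i.e. lies within the grid) of one of the following forms: (1) $v=(j,b_j-1)$ for some $j\in\{s,\dots,t\}$; (2) $v=(j,d_j+1)$ for some $j\in\{s,\dots,t\}$; (3) $v=(t+1,b_t)$; (4) $v=(s-1,d_s)$. Then $\mathrm{Cov}(I)=C\cap\mathbb{I}_{m,n}$.
   Context: For integers $m,n\ge1$, $G_{m,n}$ is the equioriented commutative $m\times n$ grid: the quiver with vertex set $\{(i,j):1\le i\le m,\ 1\le j\le n\}$ and arrows $(i,j)\to(i,j+1)$ and $(i,j)\to(i+1,j)$, bound by all commutativity relations. An interval of $G_{m,n}$ is a nonempty full subquiver $I$ which is connected (as an undirected graph) and convex (whenever $x,y\in I_0$ and there are paths $x\to z$ and $z\to y$ in $G_{m,n}$, then $z\in I_0$); $I_0$ denotes its vertex set. $\mathbb{I}_{m,n}$ is the set of intervals, partially ordered by $I\le J\iff I_0\subseteq J_0$; $\mathrm{Cov}(I)$ is the set of $J\in\mathbb{I}_{m,n}$ covering $I$. Staircase form: every $I\in\mathbb{I}_{m,n}$ can be written as $\bigsqcup_{i=s}^t[b_i,d_i]_i$ with $1\le s\le t\le m$, $1\le b_i\le d_i\le n$ and $b_{i+1}\le b_i\le d_{i+1}\le d_i$ for $s\le i<t$, meaning $I_0=\{(i,x): s\le i\le t,\ b_i\le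 x\le d_i\}$. *)

(* Vertices of G_{m,n} are pairs (i,j) : nat * nat with
   1 <= i <= m, 1 <= j <= n (1-indexed, as in the paper).
   A full subquiver of G_{m,n} is determined by its vertex set, so we
   represent full subquivers by their vertex sets  S : nat * nat -> Prop. *)
From Stdlib Require Import Arith Lia.

Definition vset := nat * nat -> Prop.

Definition in_grid (m n : nat) (x : nat * nat) : Prop :=
  1 <= fst x <= m /\ 1 <= snd x <= n.

Definition arrow (m n : nat) (x y : nat * nat) : Prop :=
  in_grid m n x /\ in_grid m n y /\
  ((fst y = fst x /\ snd y = S (snd x)) \/ (fst y = S (fst x) /\ snd y = snd x)).

Inductive reach (m n : nat) : nat * nat -> nat * nat -> Prop :=
| reach_refl x : in_grid m n x -> reach m n x x
| reach_step x y z : arrow m n x y -> reach m n y z -> reach m n x z.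

Inductive uconn (m n : nat) (I : vset) : nat * nat -> nat * nat -> Prop :=
| uconn_refl x : I x -> uconn m n I x x
| uconn_step x y z : I x -> I y -> (arrow m n x y \/ arrow m n y x) ->
    uconn m n I y z -> uconn m n I x z.

Definition is_interval (m n : nat) (I : vset) : Prop :=
  (forall x, I x -> in_grid m n x) /\
  (exists x, I x) /\
  (forall x y, I x -> I y -> uconn m n I x y) /\
  (forall x y z, I x -> I y -> reach m n x z -> reach m n z y -> I z).

Definition subset (I J : vset) : Prop := forall x, I x -> J x.

Definition strict_subset (I J : vset) : Prop := subset I J /\ ~ subset J I.

Definition covers (m n : nat) (I J : vset) : Prop :=
  is_interval m n J /\ strict_subset I J /\
  ~ (exists K, is_interval m n K /\ strict_subset I K /\ strict_subset K J).

Definition staircase (m n : nat) (I : vset) (s t : nat) (b d : nat -> nat) : Prop :=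
  1 <= s <= t /\ t <= m /\
  (forall i, s <= i <= t -> 1 <= b i /\ b i <= d i /\ d i <= n) /\
  (forall i, s <= i < t -> b (S i) <= b i /\ b i <= d (S i) /\ d (S i) <= d i) /\
  (forall x, I x <-> (s <= fst x <= t /\ b (fst x) <= snd x <= d (fst x))).

Definition admissible_vertex (m n : nat) (s t : nat) (b d : nat -> nat)
    (v : nat * nat) : Prop :=
  in_grid m n v /\
  ((exists j, s <= j <= t /\ v = (j, b j - 1)) \/
   (exists j, s <= j <= t /\ v = (j, S (d j))) \/
   v = (S t, b t) \/
   v = (s - 1, d s)).

(* A cover J of I adds exactly one vertex; the point is to locate it.  Since J is
   connected, some vertex of J \ I is joined by an arrow to I, so J \ I has a
   vertex above I or below I.  In the first case take such a vertex w that is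
   minimal for the path order.  Convexity of J puts every vertex lying between I
   and w into J, hence, by minimality, into I; consequently I u {w} is again an
   interval, and reading this condition off the staircase shows that w is of
   type (2) or (3).  Dually, a maximal vertex below I is of type (1) or (4).
   As J covers I, J = I u {w}. *)

From Stdlib Require Import Arith Lia Classical.

Definition convex_wrt {T} (R : T -> T -> Prop) (I : T -> Prop) : Prop :=
  forall x y z, I x -> I y -> R x z -> R z y -> I z.

Definition fills_to {T} (R : T -> T -> Prop) (I : T -> Prop) (w : T) : Prop :=
  forall y z, I y -> R y z -> R z w -> z <> w -> I z.

Lemma convex_wrt_flip {T} (R : T -> T -> Prop) (I : T -> Prop) :
  convex_wrt R I -> convex_wrt (fun x y => R y x) I.
Proof. intros HI x y z Ix Iy Hxz Hzy. exact (HI y x z Iy Ix Hzy Hxz). Qed.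

Section RankedOrder.

Variables (T : Type) (R : T -> T -> Prop) (f : T -> nat).
Hypothesis R_trans : forall x y z, R x y -> R y z -> R x z.
Hypothesis R_rank : forall x y, R x y -> x <> y -> f x < f y.

Lemma R_antisym x y : R x y -> R y x -> x = y.
Proof.
  intros Hxy Hyx. apply NNPP; intro Hne.
  pose proof (R_rank x y Hxy Hne). pose proof (R_rank y x Hyx (not_eq_sym Hne)). lia.
Qed.

Lemma exists_minimal (P : T -> Prop) :
  (exists w, P w) -> exists w, P w /\ forall z, P z -> R z w -> z = w.
Proof.
  intros [w Pw].
  induction w as [w IH] using (well_founded_induction (well_founded_ltof T f)).
  destruct (classic (exists z, P z /\ R z w /\ z <> w)) as [(z & Pz & Hzw & Hne) | Hno].
  - exact (IH z (R_rank z w Hzw Hne) Pz).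
  - exists w; split; [exact Pw|].
    intros z Pz Hzw. apply NNPP; intro Hne. apply Hno; eauto.
Qed.

Lemma exists_minimal_outside (I J : T -> Prop) a c :
  convex_wrt R J -> (forall x, I x -> J x) -> I a -> J c -> ~ I c -> R a c ->
  exists w x, J w /\ ~ I w /\ I x /\ R x w /\ fills_to R I w.
Proof.
  intros HJ HIJ Ia Jc nIc Hac.
  destruct (exists_minimal (fun z => J z /\ ~ I z /\ exists y, I y /\ R y z))
    as (w & (Jw & nIw & x & Ix & Hxw) & Hmin); [eauto 6|].
  exists w, x; repeat split; auto.
  intros y z Iy Hyz Hzw Hne. apply NNPP; intro nIz.
  apply Hne, Hmin; [|exact Hzw].
  split; [exact (HJ y w z (HIJ y Iy) Jw Hyz Hzw)|eauto].
Qed.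

Lemma convex_wrt_add (I : T -> Prop) x w :
  convex_wrt R I -> I x -> R x w -> fills_to R I w ->
  convex_wrt R (fun y => I y \/ y = w).
Proof.
  intros HI Ix Hxw Hfill y1 y2 z [I1 | ->] [I2 | ->] H1 H2.
  - left; exact (HI y1 y2 z I1 I2 H1 H2).
  - destruct (classic (z = w)) as [Hzw | Hzw]; [right | left]; eauto.
  - left; exact (HI x y2 z Ix I2 (R_trans x w z Hxw H1) H2).
  - right; exact (R_antisym z w H2 H1).
Qed.

End RankedOrder.

Section Grid.

Variables m n : nat.

Lemma reach_of_le x y :
  in_grid m n x -> in_grid m n y -> fst x <= fst y -> snd x <= snd y -> reach m n x y.
Proof.
  remember (fst y - fst x + (snd y - snd x)) as k eqn:Hk.
  revert x Hk; induction k as [|k IH]; intros [a c] Hk Hx Hy H1 H2;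
    destruct y as [a' c']; unfold in_grid in *; simpl in *.
  - replace a' with a by lia; replace c' with c by lia. now constructor.
  - destruct (Nat.lt_ge_cases a a').
    + apply reach_step with (S a, c); [|apply IH]; unfold arrow, in_grid; simpl; lia.
    + apply reach_step with (a, S c); [|apply IH]; unfold arrow, in_grid; simpl; lia.
Qed.

Lemma reachP x y :
  reach m n x y <->
  in_grid m n x /\ in_grid m n y /\ fst x <= fst y /\ snd x <= snd y.
Proof.
  split.
  - induction 1 as [x Hx | x y z (Hx & Hy & Hxy) _ (_ & Hz & H1 & H2)].
    + do 2 (split; [assumption|]); lia.
    + do 2 (split; [assumption|]); destruct Hxy as [[E1 E2] | [E1 E2]]; lia.
  - intros (Hx & Hy & H1 & H2). exact (reach_of_le x y Hx Hy H1 H2).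
Qed.

Lemma reach_trans x y z : reach m n x y -> reach m n y z -> reach m n x z.
Proof. induction 1; intros; [assumption | eapply reach_step; eauto]. Qed.

Lemma reach_rank x y : reach m n x y -> x <> y -> fst x + snd x < fst y + snd y.
Proof.
  intros (_ & _ & H1 & H2)%reachP Hne; destruct x as [a c], y as [a' c']; simpl in *.
  assert (~ (a = a' /\ c = c')) by (intros [-> ->]; auto). lia.
Qed.

Lemma reach_rank_rev x y :
  reach m n y x -> x <> y -> m + n - (fst x + snd x) < m + n - (fst y + snd y).
Proof.
  intros Hyx Hne. pose proof (reach_rank y x Hyx (not_eq_sym Hne)).
  apply reachP in Hyx as (_ & Hx & _); unfold in_grid in Hx. lia.
Qed.

Lemma uconn_trans I x y z : uconn m n I x y -> uconn m n I y z -> uconn m n I x z.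
Proof. induction 1; intros; [assumption | eapply uconn_step; eauto]. Qed.

Lemma uconn_sym I x y : uconn m n I x y -> uconn m n I y x.
Proof.
  induction 1 as [x Ix | x y z Ix Iy Hxy _ IH]; [now constructor|].
  apply uconn_trans with y; [exact IH|].
  apply uconn_step with x; [| | tauto | constructor]; assumption.
Qed.

Lemma uconn_mono (I K : vset) x y :
  subset I K -> uconn m n I x y -> uconn m n K x y.
Proof. intros HIK; induction 1; [constructor | eapply uconn_step]; eauto. Qed.

Lemma uconn_exit (I J : vset) x y : uconn m n J x y -> I x -> ~ I y ->
  exists a c, I a /\ J c /\ ~ I c /\ (arrow m n a c \/ arrow m n c a).
Proof.
  induction 1 as [x Jx | x y z Jx Jy Hxy _ IH]; intros Ix nIz; [contradiction|].
  destruct (classic (I y)) as [Iy | nIy]; [exact (IH Iy nIz) | exists x, y; tauto].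
Qed.

Lemma interval_add_vertex (I : vset) w p :
  is_interval m n I -> in_grid m n w -> I p -> arrow m n p w \/ arrow m n w p ->
  convex_wrt (reach m n) (fun y => I y \/ y = w) ->
  is_interval m n (fun y => I y \/ y = w).
Proof.
  intros (HIg & _ & HIu & _) Hw Ip Hpw Hconv.
  assert (Hlink : forall y, I y \/ y = w -> uconn m n (fun y => I y \/ y = w) y p).
  { intros y [Iy | ->].
    - apply uconn_mono with I; [intros z Iz; now left | exact (HIu y p Iy Ip)].
    - apply uconn_step with p; [now right | now left | tauto | now constructor; left]. }
  split; [intros y [Iy | ->]; auto|].
  split; [eauto|].
  split; [|exact Hconv].
  intros y z Hy Hz. apply uconn_trans with p; [|apply uconn_sym]; auto.
Qed.

Lemma covers_eq_add_vertex (I J : vset) w :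
  covers m n I J -> J w -> ~ I w -> is_interval m n (fun y => I y \/ y = w) ->
  forall x, J x <-> I x \/ x = w.
Proof.
  intros (_ & (HIJ & _) & Hmax) Jw nIw HK.
  assert (HJK : subset J (fun y => I y \/ y = w)).
  { apply NNPP; intro nJK. apply Hmax.
    exists (fun y => I y \/ y = w); split; [exact HK|]; split; split.
    - intros y Iy; now left.
    - intro HKI; exact (nIw (HKI w (or_intror eq_refl))).
    - intros y [Iy | ->]; auto.
    - exact nJK. }
  intros x; split; [apply HJK | intros [Ix | ->]; auto].
Qed.

Lemma covers_add_vertex (I J : vset) v :
  is_interval m n J -> ~ I v -> (forall x, J x <-> I x \/ x = v) -> covers m n I J.
Proof.
  intros HJ nIv HJv. split; [exact HJ|]. split.
  - split; [intros x Ix; apply HJv; now left|].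
    intro HJI; apply nIv, HJI, HJv; now right.
  - intros (K & _ & (HIK & HKI) & (HKJ & HJK)).
    apply HJK; intros x Jx; apply HJv in Jx as [Ix | ->]; [auto|].
    apply NNPP; intro nKv; apply HKI; intros y Ky.
    destruct (proj1 (HJv y) (HKJ y Ky)) as [Iy | ->]; [exact Iy | contradiction].
Qed.

Section Staircase.

Variables (I : vset) (s t : nat) (b d : nat -> nat).
Hypothesis Hst : staircase m n I s t b d.

Lemma staircase_mem i j : I (i, j) <-> s <= i <= t /\ b i <= j <= d i.
Proof. destruct Hst as (_ & _ & _ & _ & HI). exact (HI (i, j)). Qed.

Lemma staircase_in_grid x : I x -> in_grid m n x.
Proof.
  destruct Hst as ((Hs & _) & Ht & Hbd & _ & HI).
  intros (Hi & Hj)%HI; destruct (Hbd (fst x) Hi); unfold in_grid; lia.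
Qed.

Lemma admissible_not_mem v : admissible_vertex m n s t b d v -> ~ I v.
Proof.
  intros (Hv & [(j & Hj & ->) | [(j & Hj & ->) | [-> | ->]]]);
    unfold in_grid in Hv; simpl in Hv; rewrite staircase_mem; lia.
Qed.

Lemma admissible_above w x :
  ~ I w -> I x -> reach m n x w -> fills_to (reach m n) I w ->
  admissible_vertex m n s t b d w /\ exists p, I p /\ arrow m n p w.
Proof.
  destruct Hst as (Hs & Ht & Hbd & Hmono & _).
  intros nIw Ix Hxw Hfill.
  pose proof Hxw as (Hx & Hw & Hx1 & Hx2)%reachP.
  assert (Hbetween : forall y z, I y -> in_grid m n z -> fst y <= fst z <= fst w ->
            snd y <= snd z <= snd w -> z <> w -> I z).
  { intros y z Iy Hz H1 H2 Hne. apply (Hfill y z Iy); [| |exact Hne];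
      apply reachP; refine (conj _ (conj _ (conj _ _))); auto using staircase_in_grid; lia. }
  destruct w as [a c], x as [x1 x2]; unfold in_grid in Hx, Hw; simpl in *.
  rewrite staircase_mem in nIw.
  assert (Hleft : I (a, c - 1) ->
            admissible_vertex m n s t b d (a, c) /\ exists p, I p /\ arrow m n p (a, c)).
  { intros Ip. pose proof Ip as Hp; rewrite staircase_mem in Hp.
    destruct (Hbd a) as (Hba & _ & _); [lia|].
    split; [split; [unfold in_grid; simpl; lia|]|].
    - right; left; exists a; split; [lia|f_equal; lia].
    - exists (a, c - 1); split; [exact Ip|unfold arrow, in_grid; simpl; lia]. }
  destruct (Nat.lt_ge_cases x2 c) as [Hc | Hc].
  - apply Hleft, (Hbetween (x1, x2)); unfold in_grid; simpl; auto; try lia.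
    intros [=]; lia.
  - assert (x2 = c) as -> by lia.
    assert (Hx1' : x1 < a).
    { destruct (Nat.eq_dec x1 a) as [-> | ]; [|lia].
      rewrite staircase_mem in Ix; contradiction. }
    assert (Iup : I (a - 1, c)).
    { apply (Hbetween (x1, c)); unfold in_grid; simpl; auto; try lia. intros [=]; lia. }
    pose proof Iup as Hup; rewrite staircase_mem in Hup.
    destruct (Hbd (a - 1)) as (Hba & _); [lia|].
    destruct (Nat.lt_ge_cases (b (a - 1)) c) as [Hb | Hb].
    + apply Hleft, (Hbetween (a - 1, b (a - 1))); unfold in_grid; simpl; try lia.
      * apply staircase_mem; lia.
      * intros [=]; lia.
    + (* Now c = b (a - 1), so a row a of I would contain (a, c). *)
      assert (a - 1 = t) as Hat.
      { destruct (Nat.eq_dec (a - 1) t) as [|Hne]; [assumption|exfalso].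
        destruct (Hmono (a - 1)) as (Hb' & Hbd' & _); [lia|].
        replace (S (a - 1)) with a in * by lia. apply nIw; lia. }
      split; [split; [unfold in_grid; simpl; lia|]|].
      * right; right; left; rewrite <- Hat; f_equal; lia.
      * exists (a - 1, c); split; [exact Iup|unfold arrow, in_grid; simpl; lia].
Qed.

Lemma admissible_below w x :
  ~ I w -> I x -> reach m n w x -> fills_to (fun y z => reach m n z y) I w ->
  admissible_vertex m n s t b d w /\ exists p, I p /\ arrow m n w p.
Proof.
  destruct Hst as (Hs & Ht & Hbd & Hmono & _).
  intros nIw Ix Hwx Hfill.
  pose proof Hwx as (Hw & Hx & Hx1 & Hx2)%reachP.
  assert (Hbetween : forall y z, I y -> in_grid m n z -> fst w <= fst z <= fst y ->
            snd w <= snd z <= snd y -> z <> w -> I z).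
  { intros y z Iy Hz H1 H2 Hne. apply (Hfill y z Iy); [| |exact Hne];
      apply reachP; refine (conj _ (conj _ (conj _ _))); auto using staircase_in_grid; lia. }
  destruct w as [a c], x as [x1 x2]; unfold in_grid in Hx, Hw; simpl in *.
  rewrite staircase_mem in nIw.
  assert (Hright : I (a, S c) ->
            admissible_vertex m n s t b d (a, c) /\ exists p, I p /\ arrow m n (a, c) p).
  { intros Ip. pose proof Ip as Hp; rewrite staircase_mem in Hp.
    destruct (Hbd a) as (_ & _ & Hdn); [lia|].
    split; [split; [unfold in_grid; simpl; lia|]|].
    - left; exists a; split; [lia|f_equal; lia].
    - exists (a, S c); split; [exact Ip|unfold arrow, in_grid; simpl; lia]. }
  destruct (Nat.lt_ge_cases c x2) as [Hc | Hc].
  - apply Hright, (Hbetween (x1, x2)); unfold in_grid; simpl; auto; try lia.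
    intros [=]; lia.
  - assert (x2 = c) as -> by lia.
    assert (Hx1' : a < x1).
    { destruct (Nat.eq_dec x1 a) as [-> | ]; [|lia].
      rewrite staircase_mem in Ix; contradiction. }
    assert (Idown : I (S a, c)).
    { apply (Hbetween (x1, c)); unfold in_grid; simpl; auto; try lia. intros [=]; lia. }
    pose proof Idown as Hdown; rewrite staircase_mem in Hdown.
    destruct (Hbd (S a)) as (_ & _ & Hdn); [lia|].
    destruct (Nat.lt_ge_cases c (d (S a))) as [Hd | Hd].
    + apply Hright, (Hbetween (S a, d (S a))); unfold in_grid; simpl; try lia.
      * apply staircase_mem; lia.
      * intros [=]; lia.
    + assert (S a = s) as Has.
      { destruct (Nat.eq_dec (S a) s) as [|Hne]; [assumption|exfalso].
        destruct (Hmono a) as (_ & Hbd' & Hdd'); [lia|].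
        apply nIw; lia. }
      split; [split; [unfold in_grid; simpl; lia|]|].
      * right; right; right; rewrite <- Has; f_equal; lia.
      * exists (S a, c); split; [exact Idown|unfold arrow, in_grid; simpl; lia].
Qed.

Lemma exists_admissible_extension (J : vset) a c :
  is_interval m n I -> is_interval m n J -> subset I J ->
  I a -> J c -> ~ I c -> arrow m n a c \/ arrow m n c a ->
  exists w, J w /\ ~ I w /\ admissible_vertex m n s t b d w /\
            is_interval m n (fun y => I y \/ y = w).
Proof.
  intros HI HJ HIJ Ia Jc nIc Hac.
  pose proof HI as (HIg & _ & _ & HIconv); pose proof HJ as (HJg & _ & _ & HJconv).
  destruct Hac as [Hac | Hca].
  - destruct (exists_minimal_outside _ (reach m n) _ reach_rank I J a c)
      as (w & x & Jw & nIw & Ix & Hxw & Hfill); auto.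
    { apply reach_step with c; [exact Hac | constructor; apply HJg, Jc]. }
    destruct (admissible_above w x nIw Ix Hxw Hfill) as (Hadm & p & Ip & Hpw).
    exists w; refine (conj Jw (conj nIw (conj Hadm _))).
    apply interval_add_vertex with p; auto.
    exact (convex_wrt_add _ _ _ reach_trans reach_rank I x w HIconv Ix Hxw Hfill).
  - destruct (exists_minimal_outside _ (fun y z => reach m n z y) _ reach_rank_rev I J a c)
      as (w & x & Jw & nIw & Ix & Hwx & Hfill); auto.
    { exact (convex_wrt_flip _ _ HJconv). }
    { apply reach_step with a; [exact Hca | constructor; apply HIg, Ia]. }
    destruct (admissible_below w x nIw Ix Hwx Hfill) as (Hadm & p & Ip & Hwp).
    exists w; refine (conj Jw (conj nIw (conj Hadm _))).
    apply interval_add_vertex with p; auto.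
    apply (convex_wrt_flip (fun y z => reach m n z y)).
    exact (convex_wrt_add _ _ _ (fun x y z Hxy Hyz => reach_trans z y x Hyz Hxy)
             reach_rank_rev I x w (convex_wrt_flip _ _ HIconv) Ix Hwx Hfill).
Qed.

End Staircase.

End Grid.

Theorem mainTheorem3 (m n : nat) (Hm : 1 <= m) (Hn : 1 <= n)
    (I : vset) (HI : is_interval m n I)
    (s t : nat) (b d : nat -> nat) (Hst : staircase m n I s t b d) :
  forall J : vset,
    covers m n I J <->
    (is_interval m n J /\
     exists v, admissible_vertex m n s t b d v /\
               (forall x, J x <-> (I x \/ x = v))).
Proof.
  intros J; split.
  - intros Hcov. pose proof Hcov as (HJ & (HIJ & HJI) & _).
    apply not_all_ex_not in HJI as [c Hc]; apply imply_to_and in Hc as [Jc nIc].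
    pose proof HI as (_ & [a Ia] & _).
    destruct (uconn_exit m n I J a c) as (a' & c' & Ia' & Jc' & nIc' & Hedge);
      [apply HJ; auto | exact Ia | exact nIc |].
    destruct (exists_admissible_extension m n I s t b d Hst J a' c'
                HI HJ HIJ Ia' Jc' nIc' Hedge) as (w & Jw & nIw & Hadm & Hext).
    split; [exact HJ|]. exists w; split; [exact Hadm|].
    exact (covers_eq_add_vertex m n I J w Hcov Jw nIw Hext).
  - intros (HJ & v & Hadm & HJv).
    exact (covers_add_vertex m n I J v HJ (admissible_not_mem m n I s t b d Hst v Hadm) HJv).
Qed.
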